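(* Suppose the nontrivial move problem has been solved: each agent $a$ holds a direction $\mathrm{dir}_a\in\{\text{right},\text{left}\}$ such that the round in which every agent starts in direction $\mathrm{dir}_a$ is a nontrivial move. Then the leader election problem can be solved in $O(\log N)$ further rounds.
   Context: Model: $n>4$ agents are at distinct, arbitrary initial positions on a circle of circumference $1$ and act in synchronised unit-time rounds. Each agent has its own notion of right (clockwise) and left; these need not be consistent across agents. At the start of a round each agent chooses a direction and moves at unit speed. Agents never pass: colliding moving agents instantly reverse direction. There is no communication. At the end of each round an agent learns the clockwise distance, in its own orientation, from its start-of-round to its end-of-round position. Agents have distinct IDs in $\{1,\dots,N\}$ with $N\ge n$ known. Rotation index: if $n_C$ agents start clockwise and $n_A$ anticlockwise (objective orientation), each agent moves to the initial position of the agent $(n_C-n_A)\bmod n$ places clockwise; this is the rotation index. A nontrivial move is a round whose rotation index is not in $\{0,n/2\}$. Leader election is solved when exactly one agent has status ''leader'' and all others have status ''non-leader''. *)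

From HB Require Import structures.
From mathcomp Require Import all_boot all_order all_algebra.
From mathcomp Require Import reals.
Set Implicit Arguments. Unset Strict Implicit. Unset Printing Implicit Defensive.
Import Order.TTheory GRing.Theory Num.Theory.
Local Open Scope ring_scope.

(* Conventions.
   - The n agents are numbered 0..n-1 in (objective) clockwise order of their
     initial positions p 0 < p 1 < ... < p (n-1), all in [0,1) (the circle of
     circumference 1, parametrised clockwise).  Only indices k < n matter.
   - chir i = true  iff agent i's "right" is objective clockwise.
   - A direction choice is a bool: true = right (in the agent's own sense).
   - By the rotation-index fact, after any round the multiset of positions is
     unchanged and agent at position index k moves to position index k + r
     (mod n); hence the global state is a cumulative shift s (mod n). *)

Section Model.
Variable R : realType.

Definition cwdist (x y : R) : R := if x <= y then y - x else y - x + 1.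

(* distance observed by an agent with orientation c, currently at position
   index k, in a round of rotation index r: the distance from its start to its
   end position, measured in its own clockwise (= right) direction *)
Definition observed (p : nat -> R) (n : nat) (c : bool) (k r : nat) : R :=
  let x := p (k %% n)%N in let y := p ((k + r) %% n)%N in
  if c then cwdist x y else cwdist y x.

Definition nClock (n : nat) (chir choice : nat -> bool) : nat :=
  count (fun i => choice i == chir i) (iota 0 n).

(* rotation index (n_C - n_A) mod n *)
Definition rotation_index (n : nat) (chir choice : nat -> bool) : nat :=
  let nC := nClock n chir choice in
  let nA := (n - nC)%N in
  ((nC + (n - nA)) %% n)%N.

Definition nontrivial_move (n r : nat) : bool := (r != 0%N) && (r.*2 != n).

(* A deterministic, communication-free protocol: each agent's choice and its
   final status depend only on its own ID, its direction dir_a, and the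
   sequence of distances it has observed so far.  (N is fixed outside.) *)
Record protocol := Protocol {
  choose : nat -> bool -> seq R -> bool ;   (* true = move right *)
  is_leader : nat -> bool -> seq R -> bool
}.

Fixpoint run (P : protocol) (n : nat) (p : nat -> R) (chir dir : nat -> bool)
  (id : nat -> nat) (t : nat) : nat * (nat -> seq R) :=
  match t with
  | 0 => (0%N, fun _ => [::])
  | t'.+1 =>
    let (s, h) := run P n p chir dir id t' in
    let c := fun i => choose P (id i) (dir i) (h i) in
    let r := rotation_index n chir c in
    ((s + r)%N, fun i => rcons (h i) (observed p n (chir i) (i + s) r))
  end.

Definition elected (P : protocol) (n : nat) (p : nat -> R) (chir dir : nat -> bool)
  (id : nat -> nat) (t : nat) : bool :=
  count (fun i => is_leader P (id i) (dir i) ((run P n p chir dir id t).2 i))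
        (iota 0 n) == 1%N.

Definition valid_config (N n : nat) (p : nat -> R) (id : nat -> nat) : Prop :=
  [/\ (forall i, (i < n)%N -> 0 <= p i < 1),
      (forall i j, (i < j)%N -> (j < n)%N -> p i < p j),
      (forall i, (i < n)%N -> (1 <= id i <= N)%N) &
      (forall i j, (i < n)%N -> (j < n)%N -> id i = id j -> i = j)].

End Model.

From Pilot Require Import Defs.
From HB Require Import structures.
From mathcomp Require Import all_boot all_order all_algebra.
From mathcomp Require Import reals.
From mathcomp Require Import lra zify.
Import Order.TTheory GRing.Theory Num.Theory.
Local Open Scope ring_scope.

(* Since [n_A = n - n_C], a round with [n_C] agents moving clockwise has
   rotation index [2 n_C mod n]; it is [0] iff [n] divides [2 n_C], a property
   unchanged when every agent reverses.

   In the first two rounds every agent moves in its direction [dir], so the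
   positions it visits are [k, k + r, k + 2r] with [r] the given nontrivial
   index.  The two observed distances add up to less than [1] iff these points
   are in clockwise order for the agent; as [2r <> n] this happens exactly for
   the agents whose right is the objective direction "clockwise iff 2r < n".
   So all agents now share an orientation, and those whose [dir] points in the
   shared direction are "marked"; [r <> 0] says that [n] does not divide twice
   the number of marked agents.

   Then a binary search on the ID range [[0, 2^L)] follows: in each round the
   marked agents with ID in the upper half of the current interval move in the
   shared direction and all others in the opposite one.  Everybody learns
   whether [n] divides twice the number of such agents, and keeps the half
   where it does not; this keeps [n] from dividing twice the number of marked
   agents in the interval.  After [L] rounds the interval is a single ID,
   owned by exactly one marked agent: the leader. *)

Definition cyclic3 {d} {T : orderType d} (x y z : T) : bool :=
  [|| (x < y) && (y < z), (y < z) && (z < x) | (z < x) && (x < y)]%O.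

Lemma cyclic3_rev d (T : orderType d) (x y z : T) :
  x != y -> y != z -> z != x -> cyclic3 z y x = ~~ cyclic3 x y z.
Proof.
by rewrite /cyclic3; case: (ltgtP x y); case: (ltgtP y z); case: (ltgtP z x).
Qed.

Section NatArithmetic.
Local Open Scope nat_scope.

Lemma count_eqb (T : Type) (a : pred T) (s : seq T) (b : bool) :
  count (fun x => a x == b) s = if b then count a s else size s - count a s.
Proof.
case: b; first by apply: eq_count => x; rewrite eqb_id.
by rewrite -(count_predC a s) addKn; apply: eq_count => x; rewrite eqbF_neg.
Qed.

Lemma count_itv_split (T : Type) (a : pred T) (f : T -> nat) (l m k : nat) s :
  l <= m <= k ->
  count (fun x => a x && (l <= f x < k)) s =
  count (fun x => a x && (l <= f x < m)) s + count (fun x => a x && (m <= f x < k)) s.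
Proof.
move=> hm; elim: s => //= x s ->.
by case: (a x) => /=; case: (leqP l (f x)); case: (ltnP (f x) m);
  case: (ltnP (f x) k) => /=; lia.
Qed.

Lemma uniq_map_count_le1 (T : Type) (U : eqType) (f : T -> U) (y : U) (s : seq T) :
  uniq (map f s) -> count (fun x => f x == y) s <= 1.
Proof. by move=> us; rewrite -(count_map f (pred1 y)) count_uniq_mem ?leq_b1. Qed.

Lemma dvdn_double_subn n x : x <= n -> (n %| (n - x).*2) = (n %| x.*2).
Proof.
move=> hx; apply: dvdn_add_eq.
by rewrite -doubleD subnK // -mul2n dvdn_mull.
Qed.

Lemma eqn_modD_self n k m : (k == k + m %[mod n]) = (n %| m).
Proof. by rewrite -{1}[k]addn0 eqn_modDl mod0n eq_sym. Qed.

Lemma eqn_modD_self_small n k r : r < n -> (k == k + r %[mod n]) = (r == 0).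
Proof.
move=> r_ltn; rewrite eqn_modD_self; case: (posnP r) => [-> | r_gt0]; first exact: dvdn0.
by apply/negbTE/negP => /(dvdn_leq r_gt0); lia.
Qed.

Lemma cyclic3_mod_steps n k r : 0 < r < n -> r.*2 != n ->
  cyclic3 (k %% n) ((k + r) %% n) ((k + r + r) %% n) = (r.*2 < n).
Proof.
move=> /andP[r_gt0 r_ltn] r2_neqn; have n_gt0 : 0 < n by lia.
rewrite -(modnDml k r) -addnA -(modnDml k (r + r)) addnA.
have : k %% n < n by rewrite ltn_pmod.
move: (k %% n) => a a_ltn.
have := divn_eq (a + r) n; have := ltn_pmod (a + r) n_gt0.
have : (a + r) %/ n < 2 by rewrite ltn_divLR //; lia.
have := divn_eq (a + r + r) n; have := ltn_pmod (a + r + r) n_gt0.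
have : (a + r + r) %/ n < 3 by rewrite ltn_divLR //; lia.
move: ((a + r) %/ n) ((a + r) %% n) ((a + r + r) %/ n) ((a + r + r) %% n).
move=> [|[|q1]] b [|[|[|q2]]] c //= _ ? ? _ ? ?; rewrite /cyclic3 !ltEnat /=;
  apply/idP/idP; lia.
Qed.

Lemma rotation_indexE n chir c :
  rotation_index n chir c = (nClock n chir c).*2 %% n.
Proof.
rewrite /rotation_index subKn ?addnn //.
by rewrite -[leqRHS](size_iota 0) count_size.
Qed.

Lemma rotation_index_ltn n chir c : 0 < n -> rotation_index n chir c < n.
Proof. by move=> n_gt0; rewrite rotation_indexE ltn_pmod. Qed.

Lemma rotation_index_eq0 n chir c (S : pred nat) (g : bool) :
  (forall i, i < n -> (c i == chir i) = (S i == g)) ->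
  (rotation_index n chir c == 0) = (n %| (count S (iota 0 n)).*2).
Proof.
move=> cS; rewrite rotation_indexE.
have -> : nClock n chir c = count (fun i => S i == g) (iota 0 n).
  by apply: eq_in_count => i; rewrite mem_iota => /andP[_ /cS].
have S_le : count S (iota 0 n) <= n by rewrite -[leqRHS](size_iota 0) count_size.
by rewrite count_eqb size_iota; case: g cS => // _; apply: dvdn_double_subn.
Qed.
End NatArithmetic.

Section Observations.
Variable R : realType.

Lemma cwdist_eq0 (x y : R) : 0 <= x < 1 -> 0 <= y < 1 -> (cwdist x y == 0) = (x == y).
Proof.
move=> /andP[x_ge0 x_lt1] /andP[y_ge0 y_lt1]; rewrite /cwdist.
case: leP => [xy | yx]; first by rewrite subr_eq0 eq_sym.
by rewrite !gt_eqF //; lra.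
Qed.

Lemma cwdistD_lt1 (x y z : R) : 0 <= x < 1 -> 0 <= y < 1 -> 0 <= z < 1 ->
  x != y -> y != z -> z != x -> (cwdist x y + cwdist y z < 1) = cyclic3 x y z.
Proof.
move=> /andP[? ?] /andP[? ?] /andP[? ?]; rewrite /cwdist /cyclic3.
case: (ltgtP x y) => // xy _; case: (ltgtP y z) => // yz _;
  case: (ltgtP z x) => // zx _ /=; apply/idP/negP; lra.
Qed.

Variables (n : nat) (p : nat -> R).
Hypotheses (p_unit : forall i, (i < n)%N -> 0 <= p i < 1)
           (p_incr : forall i j, (i < j)%N -> (j < n)%N -> p i < p j).

Lemma lt_positions u v : (u < n)%N -> (v < n)%N -> (p u < p v) = (u < v)%N.
Proof.
move=> u_ltn v_ltn; case: (ltngtP u v) => [uv | vu | ->]; last by rewrite ltxx.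
- exact: p_incr.
- by apply/negbTE; rewrite -leNgt ltW // p_incr.
Qed.

Lemma eq_positions u v : (u < n)%N -> (v < n)%N -> (p u == p v) = (u == v).
Proof.
move=> u_ltn v_ltn; case: (ltngtP u v) => [uv | vu | ->]; last by rewrite !eqxx.
- by rewrite lt_eqF // lt_positions.
- by rewrite gt_eqF // lt_positions.
Qed.

Lemma cyclic3_positions u v w : (u < n)%N -> (v < n)%N -> (w < n)%N ->
  cyclic3 (p u) (p v) (p w) = cyclic3 u v w.
Proof. by move=> *; rewrite /cyclic3 !lt_positions // !ltEnat. Qed.

Lemma observed_eq0 c k r : (r < n)%N -> (observed p n c k r == 0) = (r == 0%N).
Proof.
move=> r_ltn; have n_gt0 : (0 < n)%N by lia.
rewrite /observed; case: c; rewrite cwdist_eq0 ?p_unit ?ltn_pmod //.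
  by rewrite eq_positions ?ltn_pmod ?eqn_modD_self_small.
by rewrite eq_positions ?ltn_pmod // eq_sym eqn_modD_self_small.
Qed.

Lemma observed_orientation c k r : (0 < r < n)%N -> r.*2 != n ->
  (observed p n c k r + observed p n c (k + r) r < 1) = (c == (r.*2 < n)%N).
Proof.
move=> r_range r2_neqn; have n_gt0 : (0 < n)%N by lia.
rewrite /observed.
set a := (k %% n)%N; set b := ((k + r) %% n)%N; set e := ((k + r + r) %% n)%N.
have [a_ltn b_ltn e_ltn] : [/\ a < n, b < n & e < n]%N by rewrite !ltn_pmod.
have ab : a != b by rewrite eqn_modD_self_small; lia.
have be : b != e by rewrite /b /e eqn_modD_self_small; lia.
have ea : e != a.
  rewrite eq_sym /e -addnA eqn_modD_self addnn.
  by apply/negP => /dvdnP[[|[|q]]]; rewrite ?mulSn; lia.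
case: c.
  by rewrite cwdistD_lt1 ?p_unit ?eq_positions // cyclic3_positions // cyclic3_mod_steps.
rewrite addrC cwdistD_lt1 ?p_unit ?eq_positions 1?eq_sym // cyclic3_positions //.
by rewrite cyclic3_rev // cyclic3_mod_steps //; case: ltnP.
Qed.

End Observations.

Lemma runS (R : realType) (P : protocol R) n p chir dir ids t :
  run P n p chir dir ids t.+1 =
  (let (s, h) := run P n p chir dir ids t in
   let c := fun i => Defs.choose P (ids i) (dir i) (h i) in
   let r := rotation_index n chir c in
   ((s + r)%N, fun i => rcons (h i) (observed p n (chir i) (i + s) r))).
Proof. by []. Qed.

Section BinarySearch.
Variables (R : realType) (L : nat).

(* Observations [h`_0], [h`_1] come from the two rounds in direction [dir];
   observation [h`_(j+2)] is the outcome of the [j]-th halving test. *)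
Definition agreed_right (h : seq R) : bool := nth 0 h 0 + nth 0 h 1 < 1.

Definition test_moved (h : seq R) (j : nat) : bool := nth 0 h j.+2 != 0.

Fixpoint search_lo (h : seq R) (j : nat) : nat :=
  if j is j'.+1 then
    if test_moved h j' then (search_lo h j' + 2 ^ (L - j))%N else search_lo h j'
  else 0%N.

Definition in_upper_half (id : nat) (d : bool) (h : seq R) (j : nat) : bool :=
  (d == agreed_right h) &&
  (search_lo h j + 2 ^ (L - j.+1) <= id < search_lo h j + 2 ^ (L - j))%N.

Definition search_choose (id : nat) (d : bool) (h : seq R) : bool :=
  if (size h < 2)%N then d
  else if in_upper_half id d h (size h - 2) then agreed_right h else ~~ agreed_right h.

Definition search_leader (id : nat) (d : bool) (h : seq R) : bool :=
  (d == agreed_right h) && (id == search_lo h L).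

Definition search_protocol : protocol R := Protocol search_choose search_leader.

Variables (N n : nat) (p : nat -> R) (chir dir : nat -> bool) (ids : nat -> nat).
Hypotheses (n_gt0 : (0 < n)%N) (conf : valid_config N n p ids) (N_lt : (N < 2 ^ L)%N)
  (dir_nontrivial : nontrivial_move n (rotation_index n chir dir)).

Let r0 := rotation_index n chir dir.
Let cw_agreed := (r0.*2 < n)%N.
Let marked i := dir i == (chir i == cw_agreed).
Let marked_in l m := count (fun i => marked i && (l <= ids i < m)%N) (iota 0 n).

Fixpoint lo (j : nat) : nat :=
  if j is j'.+1 then
    let mid := (lo j' + 2 ^ (L - j))%N in
    if ~~ (n %| (marked_in mid (lo j' + 2 ^ (L - j'))).*2)%N then mid else lo j'
  else 0%N.

Let moved j := ~~ (n %| (marked_in (lo j + 2 ^ (L - j.+1)) (lo j + 2 ^ (L - j))).*2)%N.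

Lemma search_loE h j :
  (forall j', (j' < j)%N -> test_moved h j' = moved j') -> search_lo h j = lo j.
Proof.
elim: j => [|j IH] //= agree.
by rewrite IH ?agree // => j' j'_lt; apply: agree; apply: ltnW.
Qed.

Lemma r0_range : (0 < r0 < n)%N /\ r0.*2 != n.
Proof.
move: dir_nontrivial => /andP[r0_neq0 r0_neq].
by rewrite lt0n r0_neq0 rotation_index_ltn.
Qed.

Lemma agreed_right_start i : (i < n)%N ->
  agreed_right [:: observed p n (chir i) (i + 0) r0; observed p n (chir i) (i + (0 + r0)) r0]
  = (chir i == cw_agreed).
Proof.
case: conf => p_unit p_incr _ _ i_ltn; have [r0_pos r0_neq] := r0_range.
by rewrite /agreed_right /= addn0 add0n observed_orientation.
Qed.

Lemma rotation_test_eq0 (h : nat -> seq R) t :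
  (forall i, (i < n)%N -> [/\ size (h i) = t.+2, agreed_right (h i) = (chir i == cw_agreed)
      & forall j, (j < t)%N -> test_moved (h i) j = moved j]) ->
  (rotation_index n chir (fun i => search_choose (ids i) (dir i) (h i)) == 0%N) = ~~ moved t.
Proof.
move=> hist; rewrite negbK.
apply: (@rotation_index_eq0 _ _ _ _ cw_agreed) => i /hist[size_h agreed tests].
rewrite /search_choose size_h /= !subSS subn0 /in_upper_half agreed.
rewrite search_loE // -/(marked i).
by case: (_ && _); case: (chir i); case: cw_agreed.
Qed.

Lemma search_history t i : (i < n)%N ->
  let h := (run search_protocol n p chir dir ids t.+2).2 i in
  [/\ size h = t.+2, agreed_right h = (chir i == cw_agreed)
    & forall j, (j < t)%N -> test_moved h j = moved j].
Proof.
elim: t i => [|t IH] i i_ltn; first by rewrite /= agreed_right_start.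
rewrite runS; move: IH; case: (run _ _ _ _ _ _ t.+2) => s h /= hist.
have := rotation_test_eq0 _ _ hist; set rot := rotation_index _ _ _ => rot_eq0.
have [size_h agreed tests] := hist i i_ltn.
have old k : (k < t.+2)%N ->
    nth 0 (rcons (h i) (observed p n (chir i) (i + s) rot)) k = nth 0 (h i) k.
  by move=> k_lt; rewrite nth_rcons size_h k_lt.
split; first by rewrite size_rcons size_h.
  by rewrite /agreed_right !old // -agreed.
case: conf => p_unit p_incr _ _ j; rewrite ltnS leq_eqVlt /test_moved.
case/orP => [/eqP -> | j_lt]; last by rewrite old ?ltnS // -tests.
by rewrite nth_rcons size_h ltnn eqxx observed_eq0 ?rotation_index_ltn // rot_eq0 negbK.
Qed.

Lemma ndvd_marked_in_start : ~~ (n %| (marked_in 0 (2 ^ L)).*2)%N.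
Proof.
have [/andP[r0_gt0 _] _] := r0_range.
have -> : marked_in 0 (2 ^ L) = count marked (iota 0 n).
  apply: eq_in_count => i; rewrite mem_iota add0n => /andP[_ i_ltn].
  case: conf => _ _ ids_range _; have /andP[_ id_le] := ids_range i i_ltn.
  by rewrite leq0n (leq_ltn_trans id_le N_lt) !andbT.
rewrite -(@rotation_index_eq0 _ chir dir _ cw_agreed) -?lt0n //.
by move=> i _; rewrite /marked; case: (dir i); case: (chir i); case: cw_agreed.
Qed.

Lemma ndvd_marked_in_lo j : (j <= L)%N -> ~~ (n %| (marked_in (lo j) (lo j + 2 ^ (L - j))).*2)%N.
Proof.
elim: j => [_ | j IH j_lt]; first by rewrite subn0 ndvd_marked_in_start.
have := IH (ltnW j_lt); rewrite [lo j.+1]/=; set l := lo j; set w := (2 ^ (L - j.+1))%N.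
have -> : (2 ^ (L - j) = w + w)%N by rewrite /w addnn -mul2n -expnS; congr (2 ^ _)%N; lia.
rewrite /marked_in (@count_itv_split _ _ _ _ (l + w)) ?leq_addr ?addnA ?leq_addr //.
by case: ifP => [-> // | /negbFE upper]; rewrite doubleD dvdn_addl.
Qed.

Lemma search_elected : elected search_protocol n p chir dir ids L.+2.
Proof.
rewrite /elected; set leaders := count _ _.
have leadersE : leaders = count (fun i => marked i && (ids i == lo L)) (iota 0 n).
  apply: eq_in_count => i; rewrite mem_iota add0n => /andP[_ i_ltn].
  have [_ agreed tests] := search_history L _ i_ltn.
  by rewrite /= /search_leader agreed (search_loE _ _ tests).
have leaders_neq0 : leaders != 0%N.
  have := ndvd_marked_in_lo _ (leqnn L); rewrite /marked_in subnn expn0 leadersE.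
  rewrite (@eq_count _ _ (fun i => marked i && (ids i == lo L))).
    by apply: contraNneq => ->; apply: dvdn0.
  by move=> i /=; congr (_ && _); apply/andP/eqP => [[]|->]; lia.
have leaders_le : (leaders <= count (fun i => ids i == lo L) (iota 0 n))%N.
  by rewrite leadersE; apply: sub_count => i /andP[].
have ids_uniq : uniq (map ids (iota 0 n)).
  case: conf => _ _ _ ids_inj; rewrite map_inj_in_uniq ?iota_uniq // => i j.
  by rewrite !mem_iota !add0n => /andP[_ i_ltn] /andP[_ j_ltn]; apply: ids_inj.
have := leq_trans leaders_le (uniq_map_count_le1 _ _ ids (lo L) _ ids_uniq).
by move=> leaders_le1; apply/eqP; lia.
Qed.

End BinarySearch.

Theorem lemma7 (R : realType) :
  exists C : nat, forall N : nat, exists T : nat,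
    (T <= C * trunc_log 2 N)%N /\
    exists P : protocol R,
      forall (n : nat) (p : nat -> R) (chir dir : nat -> bool) (ids : nat -> nat),
        (4 < n)%N -> (n <= N)%N -> valid_config N n p ids ->
        nontrivial_move n (rotation_index n chir dir) ->
        elected P n p chir dir ids T.
Proof.
exists 4%N => N; case: (ltnP N 2) => [N_lt2 | N_ge2].
  by exists 0%N; split=> //; exists (search_protocol R 0) => n *; lia.
set L := (trunc_log 2 N).+1.
have L_gt1 : (1 < L)%N by rewrite ltnS trunc_log_gt0.
exists L.+2; split; first by lia.
exists (search_protocol R L) => n p chir dir ids n_gt4 _ conf nontriv.
have N_lt : (N < 2 ^ L)%N by exact: trunc_log_ltn.
by apply: (search_elected _ _ N) => //; lia.
Qed.
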